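(* Let $n\ge1$. If $\{H_1,H_2,H_3\}$ is a Hamilton decomposition of $G_{n,3}$ and $\{E_1,\dots,E_n\}$ is a Hamilton decomposition of $Q_{2n}$ (each $E_i$ a directed Hamilton cycle starting at $\mathbf 0$), then $\{g(E_i,H_j):1\le i\le n,\ 1\le j\le3\}$ is a Hamilton decomposition of $Q_{6n}$.
   Context: A Hamilton decomposition is a partition of the edge set into edge-disjoint Hamilton cycles. $Q_{2n}$ is realized on quaternary strings $q_1\cdots q_n$, adjacent iff they differ in exactly one position by $\pm1\pmod4$; $\mathbf 0=0\cdots0$. $G_{n,3}$ has vertex set $(\mathbb Z/4^n\mathbb Z)^3$, adjacency: differ in exactly one coordinate by $\pm1\pmod{4^n}$. For a directed Hamilton cycle $E$ of $Q_{2n}$ listing $e_0=\mathbf 0,\dots,e_{4^n-1}$, $\pi_E(e_p)=p$. Identify $V(Q_{6n})$ with triples $(u,w,t)$ of quaternary strings of length $n$ and set $\Psi_E(u,w,t)=(\pi_E(u),\pi_E(w),\pi_E(t))$; for a Hamilton cycle $H$ of $G_{n,3}$, $g(E,H):=\Psi_E^{-1}(H)$. *)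

From HB Require Import structures.
From mathcomp Require Import all_boot all_order all_algebra.
Set Implicit Arguments. Unset Strict Implicit. Unset Printing Implicit Defensive.
Import GRing.Theory.
Local Open Scope ring_scope.

Definition adjZ (I : finType) (R : nzRingType) (x y : {ffun I -> R}) : bool :=
  [exists i, [forall j, (j != i) ==> (x j == y j)]
             && ((y i == x i + 1) || (y i == x i - 1))].

Definition HamCycle (T : finType) (adj : rel T) (c : seq T) : Prop :=
  [/\ uniq c, size c = #|T|, (2 < size c)%N & cycle adj c].

Definition cycle_edge (T : eqType) (c : seq T) (x y : T) : bool :=
  [&& x \in c, y \in c & (next c x == y) || (next c y == x)].

Definition HamDecomp (T I : finType) (adj : rel T) (F : I -> seq T) : Prop :=
  (forall i, HamCycle adj (F i)) /\
  (forall x y, adj x y -> exists! i, cycle_edge (F i) x y).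

(* Q_{2n}: quaternary strings of length n *)
Definition Qv (n : nat) := {ffun 'I_n -> 'Z_4}.
Definition Qadj (n : nat) : rel (Qv n) := fun x y => adjZ x y.
Definition qzero (n : nat) : Qv n := [ffun _ => 0].

Definition Gv (n : nat) := {ffun 'I_3 -> 'Z_(4 ^ n)}.
Definition Gadj (n : nat) : rel (Gv n) := fun x y => adjZ x y.

(* Q_{6n}, identified with triples (u,w,t) of quaternary strings of length n:
   a string indexed by (block j, position i). *)
Definition Q6v (n : nat) := {ffun 'I_3 * 'I_n -> 'Z_4}.
Definition Q6adj (n : nat) : rel (Q6v n) := fun x y => adjZ x y.

Definition piE (n : nat) (E : seq (Qv n)) (x : Qv n) : 'Z_(4 ^ n) :=
  (index x E)%:R.

Definition PsiE (n : nat) (E : seq (Qv n)) (v : Q6v n) : Gv n :=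
  [ffun j => piE E [ffun i => v (j, i)]].

(* Psi_E^{-1} (Psi_E is a bijection when E is a Hamilton cycle) *)
Definition PsiE_inv (n : nat) (E : seq (Qv n)) (a : Gv n) : Q6v n :=
  odflt [ffun _ => 0] [pick v | PsiE E v == a].

Definition gEH (n : nat) (E : seq (Qv n)) (H : seq (Gv n)) : seq (Q6v n) :=
  map (PsiE_inv E) H.

From Pilot Require Import Defs.
From mathcomp Require Import all_boot all_order all_algebra.
(* MathComp also exports constants named adjZ and piE; re-import the
   definitions of this development so that they take precedence. *)
Import Pilot.Defs.
Set Implicit Arguments. Unset Strict Implicit. Unset Printing Implicit Defensive.
Import GRing.Theory.
Local Open Scope ring_scope.

(* Let E be a Hamilton cycle of Q_{2n}.  The position map pi_E is a bijection
   Q_{2n} -> Z/4^n sending the successor along E to +1, so two strings span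
   an edge of E iff their positions differ by +-1 (piE_step).  Splitting a
   vertex of Q_{6n} into three blocks, Psi_E is then a bijection
   Q_{6n} -> G_{n,3} under which "adjacent in G_{n,3}" means "agree on two
   blocks, and the third blocks span an edge of E" (Gadj_PsiE).  Consequently
     - Psi_E^{-1} maps Hamilton cycles of G_{n,3} to Hamilton cycles of
       Q_{6n} (gEH_ham), and
     - an edge xy of Q_{6n} changes exactly one block j0; the changed block
       spans an edge of a unique E_i, and xy lies in g(E_i,H_j) iff
       Psi_{E_i}(x)Psi_{E_i}(y) is an edge of H_j, which singles out j. *)

Lemma ham_mem (T : finType) (adj : rel T) c x : HamCycle adj c -> x \in c.
Proof.
case=> c_uniq c_size _ _; apply/negPn/negP => x_notin.
have /card_uniqP card_xc : uniq (x :: c) by rewrite /= x_notin.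
by have := max_card (mem (x :: c)); rewrite card_xc /= c_size ltnn.
Qed.

Lemma index_next (T : eqType) (c : seq T) x :
  uniq c -> x \in c -> index (next c x) c = ((index x c).+1 %% size c)%N.
Proof.
case: c => [//|y p] c_uniq x_in; rewrite next_nth x_in.
have : (index x (y :: p) < (size p).+1)%N by rewrite index_mem.
case: (ltnP (index x (y :: p)) (size p)) => [lt_xp _ | ge_xp lt_xp].
  have -> : nth y p (index x (y :: p)) = nth y (y :: p) (index x (y :: p)).+1 by [].
  by rewrite index_uniq //= modn_small.
have -> : index x (y :: p) = size p by apply/eqP; rewrite eqn_leq ge_xp -ltnS lt_xp.
by rewrite nth_default // modnn /= eqxx.
Qed.

Lemma adjZ_sym (I : finType) (R : nzRingType) (x y : {ffun I -> R}) :
  adjZ x y -> adjZ y x.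
Proof.
case/existsP=> i /andP[/forallP same step]; apply/existsP; exists i.
apply/andP; split.
  by apply/forallP=> j; apply/implyP=> ji; rewrite eq_sym (implyP (same j)).
by case/orP: step => /eqP ->; rewrite ?addrK ?subrK eqxx ?orbT.
Qed.

(* The +-1 graphs are loopless since 1 != 0 in a nontrivial ring. *)
Lemma adjZ_neq (I : finType) (R : nzRingType) (x y : {ffun I -> R}) :
  adjZ x y -> x != y.
Proof.
case/existsP=> i /andP[_ step]; apply/negP=> /eqP xy; subst y.
have: (x i + 0 == x i + 1) || (x i + 0 == x i - 1) by rewrite addr0.
by rewrite !(inj_eq (addrI _)) -[0 == - 1]eq_sym oppr_eq0 eq_sym oner_eq0.
Qed.

Definition block (I J : finType) (R : Type) (x : {ffun J * I -> R}) (j : J)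
  : {ffun I -> R} := [ffun i => x (j, i)].

Lemma adjZ_blocks (I J : finType) (R : nzRingType) (x y : {ffun J * I -> R}) :
  adjZ x y <->
  exists j0, (forall j, j != j0 -> block x j = block y j) /\
             adjZ (block x j0) (block y j0).
Proof.
split.
  case/existsP=> [[j0 i0]] /andP[/forallP same step]; exists j0; split.
    move=> j j_ne; apply/ffunP=> i; rewrite !ffunE; apply/eqP.
    by apply: (implyP (same (j, i))); rewrite xpair_eqE negb_and j_ne.
  apply/existsP; exists i0; rewrite !ffunE step andbT.
  apply/forallP=> i; apply/implyP=> i_ne; rewrite !ffunE.
  by apply: (implyP (same (j0, i))); rewrite xpair_eqE negb_and i_ne orbT.
case=> j0 [same_blocks /existsP[i0 /andP[/forallP same step]]].
apply/existsP; exists (j0, i0); rewrite !ffunE in step; rewrite step andbT.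
apply/forallP=> [[j i]]; apply/implyP; rewrite xpair_eqE negb_and.
case: (eqVneq j j0) => [->|j_ne] /= i_ne.
  by have := implyP (same i) i_ne; rewrite !ffunE.
have := congr1 (fun f : {ffun I -> R} => f i) (same_blocks j j_ne).
by rewrite /= !ffunE => ->.
Qed.

Lemma differing_block (I J : finType) (R : eqType) (x y : {ffun J * I -> R}) j0 j1 :
  (forall j, j != j1 -> block x j = block y j) -> block x j0 != block y j0 ->
  j0 = j1.
Proof. by move=> same; case: (eqVneq j0 j1) => // /same ->; rewrite eqxx. Qed.

Lemma cycle_edge_adj (T : eqType) (adj : rel T) c x y :
  (forall u v, adj u v -> adj v u) ->
  cycle adj c -> cycle_edge c x y -> adj x y.
Proof.
move=> adj_sym c_cycle /and3P[x_in y_in /orP[/eqP <-|/eqP <-]].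
  exact: next_cycle c_cycle x_in.
exact/adj_sym/(next_cycle c_cycle y_in).
Qed.

Lemma cycle_edge_map (T T' : eqType) (f : T -> T') c a b :
  injective f -> uniq c -> cycle_edge (map f c) (f a) (f b) = cycle_edge c a b.
Proof.
by move=> f_inj c_uniq; rewrite /cycle_edge !mem_map // !next_map // !(inj_eq f_inj).
Qed.

Lemma HamCycle_map (T T' : finType) (adj : rel T) (adj' : rel T') (f : T -> T') c :
  injective f -> #|T| = #|T'| -> {homo f : x y / adj x y >-> adj' x y} ->
  HamCycle adj c -> HamCycle adj' (map f c).
Proof.
move=> f_inj card_eq f_homo [c_uniq c_size c_big c_cycle]; split.
- by rewrite map_inj_uniq.
- by rewrite size_map c_size card_eq.
- by rewrite size_map.
rewrite (@cycle_map _ _ f); apply: sub_cycle c_cycle => x y; exact: f_homo.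
Qed.

Section Positions.
Variable n : nat.
Hypothesis n_gt0 : (0 < n)%N.

(* For n >= 1, Z/4^n is the genuine ring of integers modulo 4^n. *)
Lemma four_pow_gt1 : (1 < 4 ^ n)%N.
Proof. by rewrite -(expn0 4) ltn_exp2l. Qed.

Lemma card_Qv : #|Qv n| = (4 ^ n)%N.
Proof. by rewrite card_ffun !card_ord. Qed.

Lemma val_piE (E : seq (Qv n)) x : val (piE E x) = (index x E %% 4 ^ n)%N.
Proof. by rewrite /piE /= val_Zp_nat // four_pow_gt1. Qed.

Variable E : seq (Qv n).
Hypothesis E_ham : HamCycle (@Qadj n) E.

Lemma E_uniq : uniq E.
Proof. by case: E_ham. Qed.

Lemma index_lt x : (index x E < 4 ^ n)%N.
Proof.
by case: E_ham => _ size_E _ _; rewrite -card_Qv -size_E index_mem (ham_mem _ E_ham).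
Qed.

Lemma piE_inj : injective (piE E).
Proof.
move=> x y /(congr1 val); rewrite !val_piE !modn_small ?index_lt // => same_index.
by rewrite -(nth_index x (ham_mem x E_ham)) same_index nth_index // (ham_mem _ E_ham).
Qed.

Lemma piE_next x : piE E (next E x) = piE E x + 1.
Proof.
case: E_ham => _ size_E _ _; apply: val_inj.
rewrite val_piE index_next ?(ham_mem _ E_ham) ?E_uniq // size_E card_Qv.
by rewrite /piE -(natrD _ _ 1) addn1 /= val_Zp_nat ?modn_mod // four_pow_gt1.
Qed.

Lemma piE_step x y :
  (piE E y == piE E x + 1) || (piE E y == piE E x - 1) = cycle_edge E x y.
Proof.
rewrite /cycle_edge !(ham_mem _ E_ham) /= -piE_next (inj_eq piE_inj) eq_sym.
by rewrite [piE E y == _]eq_sym subr_eq -piE_next (inj_eq piE_inj) [x == _]eq_sym.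
Qed.

Lemma PsiE_block v j : PsiE E v j = piE E (block v j).
Proof. by rewrite ffunE. Qed.

Lemma PsiE_inj : injective (PsiE E).
Proof.
move=> v w same_image; apply/ffunP=> [[j i]].
have := congr1 (fun a : Gv n => a j) same_image; rewrite /= !PsiE_block.
by move/piE_inj/(congr1 (fun q : Qv n => q i)); rewrite !ffunE.
Qed.

(* Psi_E is onto: the j-th block of a preimage of a is the a_j-th vertex of E. *)
Lemma PsiE_surj a : exists v, PsiE E v = a.
Proof.
case: E_ham => _ size_E _ _.
exists [ffun p : 'I_3 * 'I_n => nth (qzero n) E (a p.1) p.2].
apply/ffunP=> j; rewrite PsiE_block.
have -> : block [ffun p : 'I_3 * 'I_n => nth (qzero n) E (a p.1) p.2] j =
          nth (qzero n) E (a j) by apply/ffunP=> i; rewrite !ffunE.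
have a_lt : (a j < size E)%N.
  by rewrite size_E card_Qv; case: (a j) => k; rewrite /= Zp_cast // four_pow_gt1.
by rewrite /piE index_uniq ?E_uniq // natr_Zp.
Qed.

Lemma PsiE_invK a : PsiE E (PsiE_inv E a) = a.
Proof.
rewrite /PsiE_inv; case: pickP => [v /eqP //| no_preimage].
by have [v v_a] := PsiE_surj a; have := no_preimage v; rewrite v_a eqxx.
Qed.

Lemma PsiEK v : PsiE_inv E (PsiE E v) = v.
Proof. by apply: PsiE_inj; rewrite PsiE_invK. Qed.

Lemma PsiE_inv_inj : injective (PsiE_inv E).
Proof. exact: can_inj PsiE_invK. Qed.

Lemma Gadj_PsiE v w :
  Gadj (PsiE E v) (PsiE E w) <->
  exists j0, (forall j, j != j0 -> block v j = block w j) /\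
             cycle_edge E (block v j0) (block w j0).
Proof.
split.
  case/existsP=> j0 /andP[/forallP same step]; exists j0; split.
    by move=> j j_ne; apply: piE_inj; rewrite -!PsiE_block; apply/eqP/(implyP (same j)).
  by rewrite -piE_step -!PsiE_block.
case=> j0 [same edge]; apply/existsP; exists j0; apply/andP; split.
  by apply/forallP=> j; apply/implyP=> j_ne; rewrite !PsiE_block same.
by rewrite !PsiE_block piE_step.
Qed.

Lemma PsiE_inv_adj a b : Gadj a b -> Q6adj (PsiE_inv E a) (PsiE_inv E b).
Proof.
rewrite -{1}(PsiE_invK a) -{1}(PsiE_invK b) => /Gadj_PsiE[j0 [same edge]].
apply/adjZ_blocks; exists j0; split=> //.
by case: E_ham => _ _ _ E_cycle; apply: cycle_edge_adj edge => //; apply: adjZ_sym.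
Qed.

Lemma gEH_ham h : HamCycle (@Gadj n) h -> HamCycle (@Q6adj n) (gEH E h).
Proof.
apply: HamCycle_map; [exact: PsiE_inv_inj | | exact: PsiE_inv_adj].
by apply: (bij_eq_card (f := PsiE_inv E)); exists (PsiE E); [exact: PsiE_invK | exact: PsiEK].
Qed.

Lemma cycle_edge_gEH h x y :
  uniq h -> cycle_edge (gEH E h) x y = cycle_edge h (PsiE E x) (PsiE E y).
Proof.
by move=> h_uniq; rewrite -{1}(PsiEK x) -{1}(PsiEK y) cycle_edge_map //; exact: PsiE_inv_inj.
Qed.

End Positions.

Theorem corollary2 (n : nat) (hn : (1 <= n)%N)
    (H : 'I_3 -> seq (Gv n)) (E : 'I_n -> seq (Qv n)) :
  HamDecomp (@Gadj n) H ->
  HamDecomp (@Qadj n) E ->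
  (forall i, head (qzero n) (E i) = qzero n) ->
  HamDecomp (@Q6adj n) (fun p : 'I_n * 'I_3 => gEH (E p.1) (H p.2)).
Proof.
move=> [H_ham H_unique] [E_ham E_unique] _; split=> [[i j] | x y].
  exact: (gEH_ham hn (E_ham i) (H_ham j)).
have H_uniq j : uniq (H j) by case: (H_ham j).
(* An edge xy of Q_{6n} changes a single block j0, whose two values span an
   edge of a unique E_i; under Psi_{E_i} it becomes an edge of a unique H_j. *)
case/adjZ_blocks=> j0 [same Q_edge].
have [i [edge_i unique_i]] := E_unique _ _ Q_edge.
have G_edge : Gadj (PsiE (E i) x) (PsiE (E i) y).
  by apply/(Gadj_PsiE hn (E_ham i)); exists j0.
have [j [edge_j unique_j]] := H_unique _ _ G_edge.
exists (i, j); split=> [|[i' j']]; rewrite /= (cycle_edge_gEH hn (E_ham _)) //.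
(* Conversely, an edge of g(E_i',H_j') containing xy forces the block that
   changes to be j0, hence i' = i, and then j' = j. *)
move=> edge'; case: (H_ham j') => _ _ _ H_cycle.
have /(Gadj_PsiE hn (E_ham i'))[j1 [same1 edge1]] :=
  cycle_edge_adj (@adjZ_sym _ _) H_cycle edge'.
have j0_j1 : j0 = j1 := differing_block same1 (adjZ_neq Q_edge).
rewrite -j0_j1 in edge1; rewrite -(unique_i _ edge1) in edge' *.
by rewrite -(unique_j _ edge').
Qed.
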